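(* Let $(V, B)$ be a finite-dimensional real or complex symplectic vector space and let $P$ be a linear operator on $V$ that is self-adjoint with respect to $B$. Let $V = \bigoplus_\lambda V^\lambda$ be the decomposition of $V$ into generalized eigenspaces of $P$. Then a subspace $W \subset V$ is invariant under $\mathrm{Aut}(V, B, P)$ if and only if $W = \bigoplus_\lambda (W \cap V^\lambda)$ and each $W \cap V^\lambda$ is an invariant subspace of $(V^\lambda, B|_{V^\lambda}, P|_{V^\lambda})$.
   Context: $P$ self-adjoint with respect to $B$ means $B(Pu, v) = B(u, Pv)$ for all $u, v$. $\mathrm{Aut}(V, B, P)$ is the group of linear automorphisms of $V$ preserving $B$ and commuting with $P$ (equivalently, preserving both $B$ and the form $A(u,v) = B(Pu,v)$); a subspace is invariant if it is preserved by this group. The generalized eigenspace for an eigenvalue $\lambda$ is $\operatorname{Ker}(P - \lambda E)^N$ for $N$ sufficiently large. In the real case, generalized eigenspaces are taken either for real eigenvalues $\lambda$, or for pairs of complex conjugate eigenvalues $\alpha \pm i\beta$, in which case the generalized eigenspace is $\operatorname{Ker}(P^2 - 2\alpha P + (\alpha^2+\beta^2)E)^N$ for large $N$. *)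

From HB Require Import structures.
From mathcomp Require Import all_boot all_order all_algebra.
From mathcomp Require Import reals complex.
Set Implicit Arguments. Unset Strict Implicit. Unset Printing Implicit Defensive.
Import Order.TTheory GRing.Theory Num.Theory.
Local Open Scope ring_scope.

(* V = K^n as row vectors 'rV[K]_n; operators act on the right (u |-> u *m P);
   a bilinear form is B(u,v) = u *m B *m v^T (a 1x1 matrix);
   subspaces are row spaces of n x n matrices (mxalgebra). *)
Section Defs.
Variables (K : fieldType) (n : nat).
Implicit Types (B P g U W : 'M[K]_n) (u v : 'rV[K]_n).

Definition form B u v : 'M[K]_1 := u *m B *m v^T.

Definition symplectic B :=
  (forall u, form B u u = 0) /\
  (forall u, (forall v, form B u v = 0) -> u = 0).

Definition self_adjoint B P := forall u v, form B (u *m P) v = form B u (v *m P).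

(* g restricts to a linear automorphism of the subspace U that preserves
   B|_U and commutes with P|_U (U is assumed P-stable where used). *)
Definition aut_on U B P g :=
  [/\ (U *m g <= U)%MS, \rank (U *m g) = \rank U,
      (forall u v, (u <= U)%MS -> (v <= U)%MS ->
          form B (u *m g) (v *m g) = form B u v)
    & (forall u, (u <= U)%MS -> u *m P *m g = u *m g *m P)].

Definition invariant_in U B P W :=
  forall g, aut_on U B P g -> (W *m g <= W)%MS.

(* q(P) for a polynomial q (horner_mx needs n.+1, so written out) *)
(* generalized eigenspace attached to q = 'X - lambda or
   q = 'X^2 - 2 alpha 'X + (alpha^2 + beta^2):  Ker q(P)^n  (n = dim V
   is "sufficiently large"). *)
Definition poly_of_op P (q : {poly K}) : 'M[K]_n :=
  \sum_(i < size q) q`_i *: (P ^+ i).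
Definition gen_eigenspace P (q : {poly K}) : 'M[K]_n :=
  kermx (poly_of_op P q ^+ n).

(* The conclusion of the theorem, for a duplicate-free list qs of the
   polynomials indexing the generalized eigenspaces of P. *)
Definition invariant_decomp_statement B P (qs : seq {poly K}) :=
  forall W : 'M[K]_n,
    invariant_in 1%:M B P W <->
    [/\ (W == \sum_(q <- qs) (W :&: gen_eigenspace P q))%MS,
        (* directness of the sum *)
        \rank W = (\sum_(q <- qs) \rank (W :&: gen_eigenspace P q)%MS)%N
      & forall q, q \in qs ->
          invariant_in (gen_eigenspace P q) B P (W :&: gen_eigenspace P q)%MS].
End Defs.

Definition complex_eigpoly (R : rcfType) n (P : 'M[R[i]]_n) (q : {poly R[i]}) :=
  exists lambda, eigenvalue P lambda /\ q = 'X - lambda%:P.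

(* Real case: real eigenvalues lambda, or pairs of complex-conjugate
   (non-real) eigenvalues alpha +- i beta, i.e. roots of the
   characteristic polynomial. *)
Definition real_eigpoly (R : rcfType) n (P : 'M[R]_n) (q : {poly R}) :=
  (exists lambda, eigenvalue P lambda /\ q = 'X - lambda%:P) \/
  (exists alpha beta : R, 0 < beta /\
     root (map_poly (real_complex R) (char_poly P)) (Complex alpha beta) /\
     q = 'X^2 - (2 * alpha) *: 'X + (alpha ^+ 2 + beta ^+ 2)%:P).

(* Every polynomial in the B-self-adjoint operator P is again B-self-adjoint, so
   the kernels of p(P) and q(P) are B-orthogonal whenever p and q are coprime.
   Hence, for a generalized eigenspace E and the sum F of the other ones, the
   projection pi onto E along F commutes with P and splits the form, so that an
   automorphism g of E extends to pi g + (1 - pi) in Aut(V, B, P).  For g = -1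
   this is the reflection 1 - 2 pi, so an invariant W is stable under pi (2 is
   invertible) and W is the direct sum of the W :&: E; for arbitrary g it shows
   that W :&: E is invariant in E.  Conversely every element of Aut(V, B, P)
   commutes with P, hence preserves each E and restricts to an automorphism of
   it.  In the real and
   complex cases the polynomials indexing the generalized eigenspaces are
   pairwise coprime and, by factoring over C, the product of their n-th powers
   is a multiple of the characteristic polynomial. *)

From Pilot Require Import Defs.
From mathcomp Require Import all_boot all_order all_algebra.
From mathcomp Require Import reals complex.
From mathcomp Require Import ring lra.
Set Implicit Arguments. Unset Strict Implicit. Unset Printing Implicit Defensive.
Import Order.TTheory GRing.Theory Num.Theory.
Local Open Scope ring_scope.

Local Notation form := Defs.form.

Lemma formDl (K : fieldType) n (B : 'M[K]_n) u1 u2 v :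
  form B (u1 + u2) v = form B u1 v + form B u2 v.
Proof. by rewrite /form !mulmxDl. Qed.

Lemma formDr (K : fieldType) n (B : 'M[K]_n) u v1 v2 :
  form B u (v1 + v2) = form B u v1 + form B u v2.
Proof. by rewrite /form linearD mulmxDr. Qed.

Lemma self_adjointE (K : fieldType) n (B A : 'M[K]_n) :
  self_adjoint B A <-> A *m B = B *m A^T.
Proof.
split=> [sa | AB u v]; last by rewrite /form trmx_mul !mulmxA -(mulmxA u) AB mulmxA.
apply/eqP/mulmxP => u; apply: trmx_inj; apply/eqP/mulmxP => v.
by apply: trmx_inj; have := sa u v; rewrite /form !trmx_mul !trmxK !mulmxA.
Qed.

Lemma horner_mx_self_adjoint (K : fieldType) m (B P : 'M[K]_m.+1) p :
  self_adjoint B P -> self_adjoint B (horner_mx P p).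
Proof.
move/self_adjointE => PB; apply/self_adjointE.
elim/poly_ind: p => [|p c IH]; first by rewrite rmorph0 mul0mx trmx0 mulmx0.
rewrite rmorphD rmorphM /= horner_mx_X horner_mx_C -!mulmxE.
have PQ : P *m horner_mx P p = horner_mx P p *m P by apply: comm_mx_horner.
rewrite mulmxDl linearD /= mulmxDr trmx_mul -mulmxA PB mulmxA IH -mulmxA.
by rewrite -!trmx_mul PQ mul_scalar_mx tr_scalar_mx mul_mx_scalar.
Qed.

(* By Bezout, u = u * (b q)(P), and (b q)(P) can be moved across the form. *)
Lemma form_kermxpoly_coprime (K : fieldType) n (B P : 'M[K]_n) p q u v :
  self_adjoint B P -> coprimep p q ->
  (u <= kermxpoly P p)%MS -> (v <= kermxpoly P q)%MS -> form B u v = 0.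
Proof.
case: n => [|m] in B P u v *; first by rewrite [u]thinmx0 /form !mul0mx.
move=> /(horner_mx_self_adjoint _) sa /Bezout_eq1_coprimepP[[a b] /= bez].
move=> /sub_kermxP up /sub_kermxP vq.
have bez_u : u *m horner_mx P (p * a + b * q) = u.
  by rewrite mulrC bez rmorph1 mulmx1.
rewrite rmorphD !rmorphM -!mulmxE mulmxDr !mulmxA up mul0mx add0r in bez_u.
by rewrite -bez_u sa vq /form trmx0 mulmx0.
Qed.

Lemma aut_on_opp1 (K : fieldType) n (U B P : 'M[K]_n) : aut_on U B P (- 1%:M).
Proof.
split=> [||u v _ _|u _]; rewrite ?mulmxN ?mulmx1 ?mulNmx ?mul1mx //.
- by rewrite eqmx_opp.
- by rewrite mxrank_opp.
- by rewrite /form linearN /= mulmxN !mulNmx opprK.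
Qed.

Lemma aut_on1_kermxpoly (K : fieldType) n (B P g : 'M[K]_n) p :
  aut_on 1%:M B P g -> aut_on (kermxpoly P p) B P g.
Proof.
case=> _ rank_g form_g comm_g; split.
- apply/comm_mx_stable_kermxpoly/eqP/mulmxP => u.
  by rewrite !mulmxA comm_g ?submx1.
- by apply: mxrankMfree; rewrite mul1mx mxrank1 in rank_g; rewrite /row_free rank_g.
- by move=> u v _ _; rewrite form_g ?submx1.
- by move=> u _; rewrite comm_g ?submx1.
Qed.

Section OrthogonalSplitting.

Variables (K : fieldType) (n : nat) (B P E F : 'M[K]_n).
Hypotheses (EF_cap0 : (E :&: F = 0)%MS) (EF_full : (1%:M <= E + F)%MS).
Hypotheses (E_stable : stablemx E P) (F_stable : stablemx F P).
Hypothesis EF_orth : forall u v, (u <= E)%MS -> (v <= F)%MS -> form B u v = 0.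
Hypothesis FE_orth : forall u v, (u <= F)%MS -> (v <= E)%MS -> form B u v = 0.

Local Notation pi := (proj_mx E F).

Lemma proj_mx_compl p (A : 'M_(p, n)) : (A - A *m pi <= F)%MS.
Proof. by apply: proj_mx_compl_sub; apply: submx_trans (submx1 _) EF_full. Qed.

Lemma form_split x1 x2 y1 y2 :
  (x1 <= E)%MS -> (y1 <= E)%MS -> (x2 <= F)%MS -> (y2 <= F)%MS ->
  form B (x1 + x2) (y1 + y2) = form B x1 y1 + form B x2 y2.
Proof.
move=> x1E y1E x2F y2F.
by rewrite !formDl !formDr (EF_orth x1E y2F) (FE_orth x2F y1E) addr0 add0r.
Qed.

Lemma form_proj_mx u v :
  form B u v = form B (u *m pi) (v *m pi) + form B (u - u *m pi) (v - v *m pi).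
Proof.
by rewrite -form_split ?proj_mx_sub ?proj_mx_compl // !subrKC.
Qed.

Lemma proj_mx_comm : P *m pi = pi *m P.
Proof.
apply/eqP/mulmxP => u; rewrite (mulmxA u P) (mulmxA u pi).
rewrite -{1}(subrKC (u *m pi) u) mulmxDl mulmxDl.
have uPE : (u *m pi *m P <= E)%MS.
  by apply: submx_trans E_stable; apply/submxMr/proj_mx_sub.
have uPF : ((u - u *m pi) *m P <= F)%MS.
  by apply: submx_trans F_stable; apply/submxMr/proj_mx_compl.
by rewrite (proj_mx_id EF_cap0 uPE) (proj_mx_0 EF_cap0 uPF) addr0.
Qed.

Definition extend_by_id (g : 'M[K]_n) := pi *m g + (1%:M - pi).

Lemma mulmx_extend_by_id g (u : 'rV_n) : u *m extend_by_id g = u *m pi *m g + (u - u *m pi).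
Proof. by rewrite mulmxDr mulmxA mulmxBr mulmx1. Qed.

Lemma extend_by_id_on_E g p (A : 'M_(p, n)) :
  (A <= E)%MS -> A *m extend_by_id g = A *m g.
Proof.
by move=> AE; rewrite mulmxDr mulmxA proj_mx_id // mulmxBr mulmx1 proj_mx_id // subrr addr0.
Qed.

Lemma extend_by_id_on_F g p (A : 'M_(p, n)) :
  (A <= F)%MS -> A *m extend_by_id g = A.
Proof.
by move=> AF; rewrite mulmxDr mulmxA proj_mx_0 // mul0mx add0r mulmxBr mulmx1 proj_mx_0 // subr0.
Qed.

Lemma aut_on_extend_by_id g : aut_on E B P g -> aut_on 1%:M B P (extend_by_id g).
Proof.
case=> gE rank_g form_g comm_g.
have gpiE u : (u *m pi *m g <= E)%MS.
  by apply: submx_trans gE; apply/submxMr/proj_mx_sub.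
split.
- exact: submx1.
- rewrite mul1mx mxrank1; apply/eqP; change (row_full (extend_by_id g)).
  rewrite -sub1mx.
  apply: submx_trans EF_full _; rewrite addsmx_sub; apply/andP; split.
    have E_Eg : (E <= E *m g)%MS by rewrite -(mxrank_leqif_sup gE).2 rank_g.
    by rewrite (submx_trans E_Eg) // -(extend_by_id_on_E g (submx_refl E)) submxMl.
  by rewrite -{1}(extend_by_id_on_F g (submx_refl F)) submxMl.
- move=> u v _ _; rewrite !mulmx_extend_by_id form_split ?gpiE ?proj_mx_compl //.
  by rewrite form_g ?proj_mx_sub // -form_proj_mx.
- move=> u _; rewrite !mulmx_extend_by_id mulmxDl mulmxBl -!(mulmxA u P) proj_mx_comm.
  by rewrite (mulmxA u pi P) comm_g ?proj_mx_sub.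
Qed.

Lemma extend_by_id_opp1 : extend_by_id (- 1%:M) = 1%:M - pi *+ 2.
Proof. by rewrite /extend_by_id mulmxN mulmx1 mulr2n opprD addrCA addrA. Qed.

(* pi = (1 - r) / 2 for the reflection r := extend_by_id (-1) = 1 - 2 pi in Aut(V, B, P). *)
Lemma invariant_proj_mx W :
  (2%:R : K) != 0 -> invariant_in 1%:M B P W -> (W *m pi <= W)%MS.
Proof.
move=> two_neq0 W_inv; have := W_inv _ (aut_on_extend_by_id (aut_on_opp1 E B P)).
rewrite extend_by_id_opp1 => W_refl.
have -> : pi = 2%:R^-1 *: (1%:M - (1%:M - pi *+ 2)).
  by rewrite opprB addrC subrK -scaler_nat scalerA mulVf // scale1r.
by rewrite -scalemxAr scalemx_sub // mulmxBr mulmx1 addmx_sub // eqmx_opp.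
Qed.

Lemma invariant_in_capmx W :
  invariant_in 1%:M B P W -> invariant_in E B P (W :&: E)%MS.
Proof.
move=> W_inv g g_aut; have [gE _ _ _] := g_aut.
rewrite sub_capmx; apply/andP; split; last exact: submx_trans (submxMr _ (capmxSr _ _)) gE.
rewrite -(extend_by_id_on_E g (capmxSr W E)).
exact: submx_trans (submxMr _ (capmxSl _ _)) (W_inv _ (aut_on_extend_by_id g_aut)).
Qed.

End OrthogonalSplitting.

Lemma poly_of_opE (K : fieldType) m (P : 'M[K]_m.+1) q : poly_of_op P q = horner_mx P q.
Proof.
rewrite -[in RHS](coefK q) poly_def linear_sum; apply: eq_bigr => i _.
by rewrite linearZ /= rmorphXn /= horner_mx_X.
Qed.

Lemma gen_eigenspaceE (K : fieldType) n (P : 'M[K]_n) q :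
  gen_eigenspace P q = kermxpoly P (q ^+ n).
Proof.
case: n => [|m] in P *; first by rewrite !thinmx0.
by rewrite /gen_eigenspace /kermxpoly poly_of_opE rmorphXn.
Qed.

Lemma kermxpoly_char_poly_dvd (K : fieldType) n (P : 'M[K]_n) p :
  char_poly P %| p -> (kermxpoly P p :=: 1%:M)%MS.
Proof.
case: n => [|m] in P *; first by rewrite !thinmx0.
by move=> dvd_p; apply/kermxpoly_min/(dvdp_trans (mxminpoly_dvd_char P)).
Qed.

Section GeneralizedEigenspaces.

Variables (K : fieldType) (n : nat) (B P : 'M[K]_n) (qs : seq {poly K}).
Hypotheses (P_sa : self_adjoint B P) (qs_uniq : uniq qs).
Hypothesis qs_coprime : {in qs &, forall p q, p != q -> coprimep p q}.
Hypothesis char_poly_dvd : char_poly P %| \prod_(q <- qs) q ^+ n.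

Local Notation N := (size qs).
Local Notation V i := (kermxpoly P (qs`_i ^+ n)).
Local Notation Vc i := (kermxpoly P (\prod_(j < N | j != i) qs`_j ^+ n)).

Lemma coprimep_nth_expn (i j : 'I_N) : i != j -> coprimep (qs`_i ^+ n) (qs`_j ^+ n).
Proof.
move=> ij; apply/coprimep_expl/coprimep_expr/qs_coprime; rewrite ?mem_nth //.
by rewrite nth_uniq.
Qed.

Lemma coprimep_nth_expn_compl (i : 'I_N) :
  coprimep (qs`_i ^+ n) (\prod_(j < N | j != i) qs`_j ^+ n).
Proof.
apply: (big_ind (coprimep _)) => [|x y cx cy|j ji]; first exact: coprimep1.
  by rewrite coprimepMr cx cy.
by rewrite coprimep_nth_expn // eq_sym.
Qed.

Lemma kermxpoly_prod_nth_expn : (kermxpoly P (\prod_(i < N) qs`_i ^+ n) :=: 1%:M)%MS.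
Proof.
by apply: kermxpoly_char_poly_dvd; have := char_poly_dvd; rewrite (big_nth 0) big_mkord.
Qed.

Lemma sum_geigenspace : (\sum_(i < N) V i :=: 1%:M)%MS.
Proof.
apply: eqmx_trans (eqmx_sym (kermxpoly_prod _ _)) kermxpoly_prod_nth_expn.
by move=> i j _ _ ji; rewrite coprimep_nth_expn // eq_sym.
Qed.

Lemma mxdirect_geigenspace : mxdirect (\sum_(i < N) V i).
Proof. by apply: mxdirect_sum_kermx => i j _ _ ji; rewrite coprimep_nth_expn // eq_sym. Qed.

Lemma geigenspace_sub_compl (i j : 'I_N) : j != i -> (V j <= Vc i)%MS.
Proof.
move=> ji; have Vc_sum := @kermxpoly_prod K n P _ (fun k => k != i) (fun k => qs`_k ^+ n).
rewrite Vc_sum; first exact: (sumsmx_sup j).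
by move=> k l _ _ lk; rewrite coprimep_nth_expn // eq_sym.
Qed.

Lemma geigenspace_compl_cap0 (i : 'I_N) : (V i :&: Vc i = 0)%MS.
Proof. exact/mxdirect_kermxpoly/coprimep_nth_expn_compl. Qed.

Lemma geigenspace_compl_full (i : 'I_N) : (1%:M <= V i + Vc i)%MS.
Proof.
have prod_i : \prod_(j < N) qs`_j ^+ n = qs`_i ^+ n * \prod_(j < N | j != i) qs`_j ^+ n.
  by rewrite (bigD1 i).
by rewrite -(kermxpolyM P (coprimep_nth_expn_compl i)) -prod_i kermxpoly_prod_nth_expn.
Qed.

Lemma kermxpoly_stable p : stablemx (kermxpoly P p) P.
Proof. exact/comm_mx_stable_kermxpoly/comm_mx_refl. Qed.

Section OneEigenspace.

Variable i : 'I_N.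

Let orth_V u v : (u <= V i)%MS -> (v <= Vc i)%MS -> form B u v = 0.
Proof. exact/form_kermxpoly_coprime/coprimep_nth_expn_compl. Qed.

Let orth_Vc u v : (u <= Vc i)%MS -> (v <= V i)%MS -> form B u v = 0.
Proof. by apply/form_kermxpoly_coprime; rewrite // coprimep_sym coprimep_nth_expn_compl. Qed.

Lemma invariant_proj_geigenspace W :
  (2%:R : K) != 0 -> invariant_in 1%:M B P W -> (W *m proj_mx (V i) (Vc i) <= W)%MS.
Proof.
exact: (invariant_proj_mx (geigenspace_compl_cap0 i) (geigenspace_compl_full i)
  (kermxpoly_stable _) (kermxpoly_stable _) orth_V orth_Vc).
Qed.

Lemma invariant_in_geigenspace W :
  invariant_in 1%:M B P W -> invariant_in (V i) B P (W :&: V i)%MS.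
Proof.
exact: (invariant_in_capmx (geigenspace_compl_cap0 i) (geigenspace_compl_full i)
  (kermxpoly_stable _) (kermxpoly_stable _) orth_V orth_Vc).
Qed.

End OneEigenspace.

Lemma invariant_sub_sum_capmx (W : 'M_n) : (2%:R : K) != 0 ->
  invariant_in 1%:M B P W -> (W <= \sum_(i < N) (W :&: V i))%MS.
Proof.
move=> two_neq0 W_inv.
have /sub_sumsmxP[w W_sum] : (W <= \sum_(i < N) V i)%MS by rewrite sum_geigenspace submx1.
rewrite {1}W_sum; apply: summx_sub_sums => i _.
have <- : W *m proj_mx (V i) (Vc i) = w i *m V i.
  rewrite W_sum mulmx_suml (bigD1 i) //= proj_mx_id ?geigenspace_compl_cap0 ?submxMl //.
  rewrite big1 ?addr0 // => j ji; rewrite proj_mx_0 ?geigenspace_compl_cap0 //.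
  exact: submx_trans (submxMl _ _) (geigenspace_sub_compl ji).
by rewrite sub_capmx invariant_proj_geigenspace // proj_mx_sub.
Qed.

Lemma mxdirect_sum_capmx (W : 'M_n) : mxdirect (\sum_(i < N) (W :&: V i)).
Proof.
apply/mxdirect_sumsP => i _; apply/eqP; rewrite -submx0.
rewrite -[X in (_ <= X)%MS](mxdirect_sumsP mxdirect_geigenspace i) //.
by apply: capmxS; [apply: capmxSr | apply: sumsmxS => j _; apply: capmxSr].
Qed.

Lemma sum_capmx_invariant (W : 'M_n) :
    (W <= \sum_(i < N) (W :&: V i))%MS ->
    (forall i : 'I_N, invariant_in (V i) B P (W :&: V i)%MS) ->
  invariant_in 1%:M B P W.
Proof.
move=> W_sum W_inv g g_aut.
apply: submx_trans (submxMr g W_sum) _; rewrite sumsmxMr.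
apply/sumsmx_subP => i _; apply: submx_trans (capmxSl _ (V i)).
exact: W_inv (aut_on1_kermxpoly _ g_aut).
Qed.

Theorem invariant_decomp : (2%:R : K) != 0 -> invariant_decomp_statement B P qs.
Proof.
move=> two_neq0 W.
rewrite (big_nth 0) big_mkord [X in (_ = X)%N](big_nth 0) big_mkord.
under eq_bigr => i _ do rewrite gen_eigenspaceE.
under [X in (_ = X)%N]eq_bigr => i _ do rewrite gen_eigenspaceE.
split=> [W_inv | [/andP[W_sum _] _ W_inv]].
- have W_eq : (W == \sum_(i < N) (W :&: V i))%MS.
    by rewrite invariant_sub_sum_capmx //; apply/sumsmx_subP => i _; apply: capmxSl.
  split=> //; first by rewrite (eqmx_rank W_eq) (mxdirectP (mxdirect_sum_capmx W)).
  move=> q /(nthP 0)[i i_lt <-]; rewrite gen_eigenspaceE.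
  exact: invariant_in_geigenspace (Ordinal i_lt) W W_inv.
- apply: sum_capmx_invariant => // i.
  by have := W_inv _ (mem_nth 0 (ltn_ord i)); rewrite gen_eigenspaceE.
Qed.

End GeneralizedEigenspaces.

Lemma dvdp_prod_expn_size (K : fieldType) (qs t : seq {poly K}) :
  uniq qs -> all (mem qs) t -> \prod_(r <- t) r %| \prod_(q <- qs) q ^+ size t.
Proof.
move=> qs_uniq; elim: t => [|r t IHt] /=; first by rewrite big_nil dvd1p.
case/andP => r_qs /IHt t_dvd; rewrite big_cons.
under [X in _ %| X]eq_bigr => q _ do rewrite exprS.
by rewrite big_split /= dvdp_mul // (bigD1_seq r) //= dvdp_mulIl.
Qed.

Lemma char_poly_dvd_prod_XsubC (K : closedFieldType) n (P : 'M[K]_n) qs :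
    uniq qs -> (forall a, eigenvalue P a -> 'X - a%:P \in qs) ->
  char_poly P %| \prod_(q <- qs) q ^+ n.
Proof.
move=> qs_uniq qs_eig; have [s char_s] := closed_field_poly_normal (char_poly P).
rewrite (monicP (char_poly_monic P)) scale1r in char_s.
have size_s : size s = n.
  by have := size_char_poly P; rewrite char_s size_prod_XsubC => -[].
rewrite char_s -size_s -(size_map (fun z => 'X - z%:P) s).
rewrite -(big_map (fun z => 'X - z%:P) xpredT id).
apply: dvdp_prod_expn_size => //; apply/allP => _ /mapP[z zs ->].
by apply: qs_eig; rewrite eigenvalue_root_char char_s root_prod_XsubC.
Qed.

Lemma invariant_decomp_complex (R : rcfType) n (B P : 'M[R[i]]_n) qs :
    self_adjoint B P -> uniq qs -> (forall q, q \in qs <-> complex_eigpoly P q) ->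
  invariant_decomp_statement B P qs.
Proof.
move=> P_sa qs_uniq qs_eig; apply: invariant_decomp => //; last by rewrite pnatr_eq0.
- move=> _ _ /qs_eig[a [_ ->]] /qs_eig[b [_ ->]] ab; apply: coprimep_XsubC2.
  by rewrite subr_eq0; apply: contraNneq ab => ->.
- by apply: char_poly_dvd_prod_XsubC => // a a_eig; apply/qs_eig; exists a.
Qed.

Section RealEigenpolynomials.

Variable R : rcfType.
Local Notation toC := (real_complex R).

Definition quad (a b : R) : {poly R} :=
  'X^2 - (2 * a) *: 'X + (a ^+ 2 + b ^+ 2)%:P.

Lemma quad_normr a b : quad a `|b| = quad a b.
Proof. by rewrite /quad real_normK ?num_real. Qed.

Lemma quad_no_root a b x : 0 < b -> ~~ root (quad a b) x.
Proof.
move=> b_gt0; rewrite /root /quad !hornerE; apply/eqP => quad_x.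
have {quad_x} : x ^+ 2 - 2 * a * x + a ^+ 2 + b ^+ 2 = 0 by [].
have := sqr_ge0 (x - a); nra.
Qed.

Lemma horner_map_quad a b c d : (map_poly toC (quad a b)).[Complex c d] =
  Complex (c * c - d * d - 2 * a * c + (a ^+ 2 + b ^+ 2)) (c * d + d * c - 2 * a * d).
Proof.
have -> : map_poly toC (quad a b) =
    'X^2 - toC (2 * a) *: 'X + (toC (a ^+ 2 + b ^+ 2))%:P.
  by rewrite rmorphD rmorphB /= map_polyXn map_polyZ map_polyX map_polyC.
rewrite !hornerE expr2 -!complexr0; simpc; congr (Complex _ _); by rewrite addrA.
Qed.

Lemma root_map_quad a b : root (map_poly toC (quad a b)) (Complex a b).
Proof. by rewrite /root horner_map_quad eq_complex /=; apply/andP; split; apply/eqP; ring. Qed.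

Lemma root_map_quadP a b z : 0 < b -> root (map_poly toC (quad a b)) z ->
  z = Complex a b \/ z = Complex a (- b).
Proof.
move=> b_gt0; case: z => c d; rewrite /root horner_map_quad eq_complex /=.
case/andP => /eqP re0 /eqP im0.
have c_a : c = a.
  have /eqP : d * (c - a) = 0 by nra.
  rewrite mulf_eq0 => /orP[/eqP d0|]; last by rewrite subr_eq0 => /eqP.
  by move: re0; rewrite d0; have := sqr_ge0 (c - a); nra.
subst c; have /eqP : (d - b) * (d + b) = 0 by nra.
by rewrite mulf_eq0 => /orP[] /eqP db; [left | right]; congr Complex; lra.
Qed.

Lemma coprimep_real_eigpoly n (P : 'M[R]_n) p q :
  real_eigpoly P p -> real_eigpoly P q -> p != q -> coprimep p q.
Proof.
case=> [[a [_ ->]] | [a [b [b_gt0 [_ ->]]]]];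
  case=> [[c [_ ->]] | [c [d [d_gt0 [_ ->]]]]] pq.
- by apply: coprimep_XsubC2; rewrite subr_eq0; apply: contraNneq pq => ->.
- by rewrite coprimep_sym coprimep_XsubC quad_no_root.
- by rewrite coprimep_XsubC quad_no_root.
rewrite -(coprimep_map toC); apply: Pdiv.ClosedField.root_coprimep => z rz.
apply/negP => rz'; move: pq.
have [z_ab|z_ab] := root_map_quadP b_gt0 rz;
  have [z_cd|z_cd] := root_map_quadP d_gt0 rz'; rewrite z_ab in z_cd; case: z_cd => <- bd;
  by rewrite (_ : b = d) ?eqxx //; lra.
Qed.

Definition real_factor (z : R[i]) : {poly R} :=
  if complex.Im z == 0 then 'X - (complex.Re z)%:P
  else quad (complex.Re z) `|complex.Im z|.

Lemma XsubC_dvdp_real_factor z : 'X - z%:P %| map_poly toC (real_factor z).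
Proof.
rewrite dvdp_XsubCl /real_factor quad_normr; case: z => a b /=.
by case: eqP => [->|_]; rewrite ?map_polyXsubC ?root_XsubC ?root_map_quad.
Qed.

Lemma real_factor_eigpoly n (P : 'M[R]_n) z :
  root (map_poly toC (char_poly P)) z -> real_eigpoly P (real_factor z).
Proof.
rewrite /real_factor; case: z => a b /= root_ab; case: eqP => [b0|/eqP b_neq0].
  left; exists a; split => //.
  by rewrite eigenvalue_root_char -(fmorph_root toC); rewrite b0 in root_ab.
right; exists a, `|b|; split; first by rewrite normr_gt0.
split => //; have [b_gt0|b_le0] := ltrP 0 b; first by rewrite gtr0_norm.
rewrite ler0_norm // (_ : Complex a (- b) = (Complex a b)^*%C) //.
rewrite -complex_root_conj -map_poly_comp (eq_map_poly (fun x => conjc_real x)).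
by [].
Qed.

Lemma char_poly_dvd_real n (P : 'M[R]_n) qs :
    uniq qs -> (forall q, real_eigpoly P q -> q \in qs) ->
  char_poly P %| \prod_(q <- qs) q ^+ n.
Proof.
move=> qs_uniq qs_eig; rewrite -(dvdp_map toC).
have [s char_s] := closed_field_poly_normal (map_poly toC (char_poly P)).
rewrite lead_coef_map (monicP (char_poly_monic P)) rmorph1 scale1r in char_s.
have size_s : size s = n.
  by have := size_char_poly P; rewrite -(size_map_poly toC) char_s size_prod_XsubC => -[].
rewrite char_s; apply: (@dvdp_trans _ (\prod_(z <- s) map_poly toC (real_factor z))).
  apply: (big_ind2 (fun x y => x %| y)) => [//|x1 x2 y1 y2|z _].
    exact: dvdp_mul.
  exact: XsubC_dvdp_real_factor.
rewrite -rmorph_prod dvdp_map -size_s -(size_map real_factor) -(big_map real_factor xpredT id).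
apply: dvdp_prod_expn_size => //; apply/allP => _ /mapP[z zs ->].
by apply/qs_eig/real_factor_eigpoly; rewrite char_s root_prod_XsubC.
Qed.

End RealEigenpolynomials.

Lemma invariant_decomp_real (R : rcfType) n (B P : 'M[R]_n) qs :
    self_adjoint B P -> uniq qs -> (forall q, q \in qs <-> real_eigpoly P q) ->
  invariant_decomp_statement B P qs.
Proof.
move=> P_sa qs_uniq qs_eig; apply: invariant_decomp => //; last by rewrite pnatr_eq0.
- by move=> p q /qs_eig p_eig /qs_eig; apply: coprimep_real_eigpoly p_eig.
- by apply: char_poly_dvd_real => // q /qs_eig.
Qed.

Theorem theorem6 :
  (* real case *)
  (forall (R : realType) (n : nat) (B P : 'M[R]_n) (qs : seq {poly R}),
      symplectic B -> self_adjoint B P ->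
      uniq qs -> (forall q, q \in qs <-> real_eigpoly P q) ->
      invariant_decomp_statement B P qs) /\
  (* complex case *)
  (forall (R : realType) (n : nat) (B P : 'M[R[i]]_n) (qs : seq {poly R[i]}),
      symplectic B -> self_adjoint B P ->
      uniq qs -> (forall q, q \in qs <-> complex_eigpoly P q) ->
      invariant_decomp_statement B P qs).
Proof.
split=> R n B P qs _; [exact: invariant_decomp_real | exact: invariant_decomp_complex].
Qed.
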